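(* If $\sum_{i=1}^M b_i\ge1$, then for every $\epsilon>0$, $$\bar\Delta_{\mathrm{opt}}(\epsilon)\le\bar\Delta(\mathbf r^\star)\le\sum_{i=1}^M\Big[\frac{w_i\,e^{x^\star\epsilon}\big(1+\frac1{x^\star}\big)}{\min\{b_i,\beta^\star\sqrt{w_i}\}}+w_i\Big],$$ where $\mathbf r^\star$, $x^\star$, $\beta^\star$ are as in the energy-adequate solution.
   Context: Fix an integer $M\ge1$, weights $w_1,\dots,w_M>0$, constants $b_1,\dots,b_M>0$, and $\epsilon>0$. For $\mathbf r\in(0,\infty)^M$ write $S(\mathbf r)=\sum_{i=1}^M r_i$ and define $$\bar\Delta(\mathbf r)=\sum_{l=1}^M \frac{w_l e^{-r_l\epsilon}}{r_l}\, e^{\epsilon S(\mathbf r)}\big(1+S(\mathbf r)\big)+\sum_{l=1}^M w_l,\qquad \sigma_l(\mathbf r)=\frac{(1-e^{-r_l\epsilon})S(\mathbf r)+r_le^{-r_l\epsilon}}{S(\mathbf r)+1}.$$ Problem 1: minimize $\bar\Delta(\mathbf r)$ over $\mathbf r\in(0,\infty)^M$ subject to $\sigma_l(\mathbf r)\le b_l$ for all $l$; its optimal (infimum) value is $\bar\Delta_{\mathrm{opt}}(\epsilon)$. Energy-adequate solution (when $\sum_i b_i\ge1$): let $\beta^\star\in[0,\max_l b_l/\sqrt{w_l}]$ be the root of $\sum_{i=1}^M\min\{b_i,\beta^\star\sqrt{w_i}\}=1$, let $x^\star=-\tfrac12+\sqrt{\tfrac14+\tfrac1\epsilon}$, and set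 $r^\star_l=\min\{b_l,\beta^\star\sqrt{w_l}\}\,x^\star$. *)

(* classical reals. Indices l = 0..M-1 (paper: 1..M). *)
From Stdlib Require Import Reals Lra.
Open Scope R_scope.

Fixpoint sumR (M : nat) (f : nat -> R) : R :=
  match M with
  | O => 0
  | S k => sumR k f + f k
  end.

(* maxR M f = max(0, f 0, ..., f (M-1)); for positive values (M >= 1) this is max_l f l *)
Fixpoint maxR (M : nat) (f : nat -> R) : R :=
  match M with
  | O => 0
  | S k => Rmax (maxR k f) (f k)
  end.

Definition Ssum (M : nat) (r : nat -> R) : R := sumR M r.

Definition Delta_bar (M : nat) (w : nat -> R) (eps : R) (r : nat -> R) : R :=
  sumR M (fun l => w l * exp (- r l * eps) / r l * exp (eps * Ssum M r) * (1 + Ssum M r))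
  + sumR M w.

Definition sigma (M : nat) (eps : R) (r : nat -> R) (l : nat) : R :=
  ((1 - exp (- r l * eps)) * Ssum M r + r l * exp (- r l * eps)) / (Ssum M r + 1).

Definition feasible (M : nat) (b : nat -> R) (eps : R) (r : nat -> R) : Prop :=
  (forall i, (i < M)%nat -> 0 < r i) /\
  (forall l, (l < M)%nat -> sigma M eps r l <= b l).

Definition feasible_values (M : nat) (w b : nat -> R) (eps : R) (v : R) : Prop :=
  exists r, feasible M b eps r /\ v = Delta_bar M w eps r.

Definition is_glb (E : R -> Prop) (m : R) : Prop :=
  (forall v, E v -> m <= v) /\ (forall m', (forall v, E v -> m' <= v) -> m' <= m).

Definition x_star (eps : R) : R := - (1/2) + sqrt (1/4 + 1/eps).

From Pilot Require Import Defs.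
From Stdlib Require Import Reals Lra.
Open Scope R_scope.

(* With weights c summing to 1, the point r = c x has total S(r) = x, where x
   solves eps (x^2 + x) = 1.  Then sigma_l(r) <= c_l <= b_l by the elementary
   bounds 1 - e^{-t} <= t and e^{-t} <= 1, so r is feasible and bounds the
   infimum; dropping the factor e^{-r_l eps} <= 1 from each term of
   Delta_bar(r) gives the explicit bound.  The infimum exists because
   Delta_bar is nonnegative on (0,oo)^M. *)

Lemma sumR_ext M f g :
  (forall i, (i < M)%nat -> f i = g i) -> sumR M f = sumR M g.
Proof.
  induction M as [|M IH]; intros Hfg; simpl; [reflexivity|].
  rewrite IH, Hfg; auto.
Qed.

Lemma sumR_0 M : sumR M (fun _ => 0) = 0.
Proof. induction M as [|M IH]; simpl; lra. Qed.

Lemma sumR_plus M f g :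
  sumR M (fun i => f i + g i) = sumR M f + sumR M g.
Proof. induction M as [|M IH]; simpl; [|rewrite IH]; lra. Qed.

Lemma sumR_mult_r M f x : sumR M (fun i => f i * x) = sumR M f * x.
Proof. induction M as [|M IH]; simpl; [|rewrite IH]; ring. Qed.

Lemma sumR_le M f g :
  (forall i, (i < M)%nat -> f i <= g i) -> sumR M f <= sumR M g.
Proof.
  induction M as [|M IH]; intros Hfg; simpl; [lra|].
  apply Rplus_le_compat; auto.
Qed.

Lemma sumR_nonneg M f :
  (forall i, (i < M)%nat -> 0 <= f i) -> 0 <= sumR M f.
Proof. intros Hf. rewrite <- (sumR_0 M). now apply sumR_le. Qed.

Lemma Rdiv_nonneg a b : 0 <= a -> 0 < b -> 0 <= a / b.
Proof. intros Ha Hb. apply Rmult_le_pos; [exact Ha|apply Rlt_le, Rinv_0_lt_compat, Hb]. Qed.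

Lemma one_sub_exp_neg_le t : 1 - exp (- t) <= t.
Proof. pose proof (exp_ineq1_le (- t)). lra. Qed.

Lemma exp_neg_le_1 t : 0 <= t -> exp (- t) <= 1.
Proof.
  intros Ht. rewrite <- exp_0.
  destruct Ht as [Ht|<-]; [apply Rlt_le, exp_increasing; lra|now rewrite Ropp_0].
Qed.

Lemma x_star_pos eps : 0 < eps -> 0 < x_star eps.
Proof.
  intros He. unfold x_star.
  assert (1 / 2 < sqrt (1 / 4 + 1 / eps)); [|lra].
  assert (0 < 1 / eps) by (apply Rdiv_lt_0_compat; lra).
  rewrite <- (sqrt_square (1 / 2)) by lra.
  apply sqrt_lt_1_alt; lra.
Qed.

Lemma x_star_root eps : 0 < eps -> eps * (x_star eps * x_star eps + x_star eps) = 1.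
Proof.
  intros He.
  assert (0 < 1 / eps) by (apply Rdiv_lt_0_compat; lra).
  pose proof (sqrt_sqrt (1 / 4 + 1 / eps) ltac:(lra)).
  assert (Hsq : x_star eps * x_star eps + x_star eps = 1 / eps) by (unfold x_star; nra).
  rewrite Hsq. field. lra.
Qed.

Lemma is_glb_exists (E : R -> Prop) :
  (exists v, E v) -> (exists m, forall v, E v -> m <= v) -> exists m, is_glb E m.
Proof.
  intros [v Ev] [m0 Hm0].
  destruct (completeness (fun m => forall v, E v -> m <= v)) as [m [Hub Hlub]].
  - exists v. intros m Hm. now apply Hm.
  - now exists m0.
  - exists m. split.
    + intros u Eu. apply Hlub. intros m' Hm'. now apply Hm'.
    + intros m' Hm'. now apply Hub.
Qed.

Lemma Delta_bar_nonneg M w eps r :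
  (forall i, (i < M)%nat -> 0 <= w i) -> (forall i, (i < M)%nat -> 0 < r i) ->
  0 <= Delta_bar M w eps r.
Proof.
  intros Hw Hr. unfold Delta_bar.
  assert (HS : 0 <= Ssum M r) by (apply sumR_nonneg; intros i Hi; apply Rlt_le, Hr, Hi).
  apply Rplus_le_le_0_compat; apply sumR_nonneg; intros i Hi; [|now apply Hw].
  pose proof (Hw i Hi). pose proof (Hr i Hi).
  pose proof (exp_pos (- r i * eps)). pose proof (exp_pos (eps * Ssum M r)).
  apply Rmult_le_pos; [|lra]. apply Rmult_le_pos; [|lra].
  apply Rdiv_nonneg; [apply Rmult_le_pos|]; lra.
Qed.

Section ScaledPoint.

Variables (M : nat) (eps x : R) (c : nat -> R).
Hypothesis eps_pos : 0 < eps.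
Hypothesis x_pos : 0 < x.
Hypothesis x_root : eps * (x * x + x) = 1.
Hypothesis c_pos : forall i, (i < M)%nat -> 0 < c i.
Hypothesis c_sum : sumR M c = 1.

Let r l := c l * x.

Lemma Ssum_scaled : Ssum M r = x.
Proof. unfold Ssum, r. rewrite sumR_mult_r, c_sum. ring. Qed.

Lemma sigma_scaled_le l : (l < M)%nat -> Defs.sigma M eps r l <= c l.
Proof.
  intros Hl. unfold Defs.sigma. rewrite Ssum_scaled. unfold r.
  pose proof (c_pos l Hl) as Hc.
  set (e := exp (- (c l * x) * eps)).
  assert (Hloss : (1 - e) * x <= c l * x * eps * x).
  { apply Rmult_le_compat_r; [lra|].
    unfold e. rewrite <- Ropp_mult_distr_l. apply one_sub_exp_neg_le. }
  assert (Hkeep : c l * x * e <= c l * x).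
  { rewrite <- (Rmult_1_r (c l * x)) at 2.
    apply Rmult_le_compat_l; [nra|].
    unfold e. rewrite <- Ropp_mult_distr_l. apply exp_neg_le_1. nra. }
  apply Rmult_le_reg_r with (x + 1); [lra|].
  unfold Rdiv. rewrite Rmult_assoc, Rinv_l, Rmult_1_r by lra.
  assert (Hgain : c l * (eps * x * x) <= c l).
  { rewrite <- (Rmult_1_r (c l)) at 2. apply Rmult_le_compat_l; nra. }
  lra.
Qed.

Lemma feasible_scaled b :
  (forall i, (i < M)%nat -> c i <= b i) -> feasible M b eps r.
Proof.
  intros Hcb. split.
  - intros i Hi. unfold r. pose proof (c_pos i Hi). nra.
  - intros l Hl. eapply Rle_trans; [apply sigma_scaled_le|apply Hcb]; exact Hl.
Qed.

Lemma Delta_bar_scaled_le w :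
  (forall i, (i < M)%nat -> 0 <= w i) ->
  Delta_bar M w eps r <=
    sumR M (fun i => w i * exp (x * eps) * (1 + 1 / x) / c i + w i).
Proof using eps_pos x_pos c_pos c_sum.
  intros Hw. unfold Delta_bar. rewrite Ssum_scaled, sumR_plus.
  apply Rplus_le_compat_r, sumR_le. intros i Hi. unfold r.
  pose proof (c_pos i Hi). pose proof (Hw i Hi).
  assert (He : exp (- (c i * x) * eps) <= 1).
  { rewrite <- Ropp_mult_distr_l. apply exp_neg_le_1, Rlt_le, Rmult_lt_0_compat; [apply Rmult_lt_0_compat|]; lra. }
  assert (0 <= w i * exp (x * eps) * (1 + 1 / x) / c i).
  { pose proof (exp_pos (x * eps)).
    assert (0 < 1 / x) by (apply Rdiv_lt_0_compat; lra).
    apply Rdiv_nonneg; [apply Rmult_le_pos; [apply Rmult_le_pos|]|]; lra. }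
  rewrite (Rmult_comm eps x).
  replace (w i * exp (- (c i * x) * eps) / (c i * x) * exp (x * eps) * (1 + x))
    with (exp (- (c i * x) * eps) * (w i * exp (x * eps) * (1 + 1 / x) / c i))
    by (field; lra).
  rewrite <- (Rmult_1_l (_ / c i)) at 2.
  apply Rmult_le_compat_r; lra.
Qed.

End ScaledPoint.

(* The hypotheses M >= 1, sum_i b_i >= 1 and beta <= max_l b_l / sqrt w_l only
   guarantee that the root beta* exists. *)
Theorem lemma2 (M : nat) (w b : nat -> R) (eps beta : R) :
  (1 <= M)%nat ->
  (forall i, (i < M)%nat -> 0 < w i) ->
  (forall i, (i < M)%nat -> 0 < b i) ->
  0 < eps ->
  1 <= sumR M b ->
  0 <= beta ->
  beta <= maxR M (fun l => b l / sqrt (w l)) ->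
  sumR M (fun i => Rmin (b i) (beta * sqrt (w i))) = 1 ->
  let rstar := fun l => Rmin (b l) (beta * sqrt (w l)) * x_star eps in
  exists Dopt,
    is_glb (feasible_values M w b eps) Dopt /\
    Dopt <= Delta_bar M w eps rstar /\
    Delta_bar M w eps rstar <=
      sumR M (fun i => w i * exp (x_star eps * eps) * (1 + 1 / x_star eps)
                       / Rmin (b i) (beta * sqrt (w i)) + w i).
Proof.
  intros _ Hw Hb Heps _ Hbeta _ Hsum rstar.
  set (c := fun i => Rmin (b i) (beta * sqrt (w i))) in Hsum.
  assert (Hw0 : forall i, (i < M)%nat -> 0 <= w i) by (intros i Hi; apply Rlt_le, Hw, Hi).
  assert (Hbeta_pos : 0 < beta).
  { destruct Hbeta as [|<-]; [assumption|exfalso].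
    rewrite (sumR_ext M c (fun _ => 0)), sumR_0 in Hsum; [lra|].
    intros i Hi. unfold c. rewrite Rmult_0_l. apply Rmin_right, Rlt_le, Hb, Hi. }
  assert (Hc : forall i, (i < M)%nat -> 0 < c i).
  { intros i Hi. apply Rmin_pos; [now apply Hb|].
    apply Rmult_lt_0_compat; [assumption|apply sqrt_lt_R0, Hw, Hi]. }
  pose proof (x_star_pos eps Heps) as Hx.
  pose proof (x_star_root eps Heps) as Hroot.
  assert (Hfeas : feasible M b eps rstar)
    by (apply (feasible_scaled M eps _ c); auto; intros i _; apply Rmin_l).
  destruct (is_glb_exists (feasible_values M w b eps)) as [Dopt HDopt].
  - exists (Delta_bar M w eps rstar). now exists rstar.
  - exists 0. intros v [r [[Hr _] ->]]. now apply Delta_bar_nonneg.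
  - exists Dopt. split; [exact HDopt|split].
    + apply (proj1 HDopt). now exists rstar.
    + now apply (Delta_bar_scaled_le M eps _ c).
Qed.
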